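(* Let $G$ be a connected graph. Then $\{\bar{x},\overline{xy}\}\,\Theta^\ast_{S(G)}\,\{\overline{xy},\bar{y}\}$ holds for every edge $\{x,y\}$ of $G$ if and only if $\Theta^\ast_{S(G)}=S(\Theta^\ast_G)$.
   Context: For a connected graph $H$ with shortest-path distance $d_H$, two edges $\{x,y\}$ and $\{u,v\}$ of $H$ are in relation $\Theta_H$ if $d_H(x,u)+d_H(y,v)\neq d_H(x,v)+d_H(y,u)$; $\Theta^\ast_H$ is the transitive closure of $\Theta_H$. The full subdivision $S(G)$ is obtained by subdividing every edge of $G$ exactly once; the vertex of $S(G)$ corresponding to $x\in V(G)$ is $\bar{x}$ and the vertex subdividing $\{x,y\}\in E(G)$ is $\overline{xy}$. $S(\Theta^\ast_G)$ denotes the relation on $E(S(G))$ in which $\{\bar{x},\overline{xy}\}$ and $\{\bar{u},\overline{uv}\}$ are related if and only if $\{x,y\}\,\Theta^\ast_G\,\{u,v\}$ (in particular $\{\bar{x},\overline{xy}\}$ and $\{\overline{xy},\bar{y}\}$ are always related). *)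

From mathcomp Require Import all_boot.
Set Implicit Arguments. Unset Strict Implicit. Unset Printing Implicit Defensive.

Section Graphs.
Variable T : finType.
Variable e : rel T.

Definition simple_graph : Prop := symmetric e /\ irreflexive e.
Definition connected_graph : Prop := forall x y : T, connect e x y.

Definition walk_n (n : nat) (x y : T) : bool :=
  [exists p : n.-tuple T, path e x p && (last x p == y)].

(* shortest-path distance: the least n (< #|T|) such that a walk of length n
   from x to y exists; this is the usual distance when the graph is connected *)
Definition gdist (x y : T) : nat := find (fun n => walk_n n x y) (iota 0 #|T|).

(* edges of H are represented as ordered pairs (x,y) with e x y;
   Theta does not depend on the orientations *)
Definition Theta (a b : T * T) : bool :=
  [&& e a.1 a.2, e b.1 b.2 &
      gdist a.1 b.1 + gdist a.2 b.2 != gdist a.1 b.2 + gdist a.2 b.1].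

(* transitive closure of Theta (on edges; Theta is reflexive on edges) *)
Definition ThetaStar (a b : T * T) : bool := connect Theta a b.

Definition is_edge_set (s : {set T}) : bool :=
  [exists x, exists y, e x y && (s == [set x; y])].
Definition Eset := {s : {set T} | is_edge_set s}.
Definition SV : finType := (T + Eset)%type.

(* inl x is \bar x, inr s (s = {x,y}) is \overline{xy} *)
Definition sadj (a b : SV) : bool :=
  match a, b with
  | inl x, inr s => x \in val s
  | inr s, inl x => x \in val s
  | _, _ => false
  end.

Definition sub_edge (f : SV * SV) : option Eset :=
  match f with
  | (inl _, inr s) => Some s
  | (inr s, inl _) => Some s
  | _ => None
  end.

Definition SThetaStar (f1 f2 : SV * SV) : Prop :=
  match sub_edge f1, sub_edge f2 with
  | Some s1, Some s2 => exists x y u v : T,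
      val s1 = [set x; y] /\ val s2 = [set u; v] /\ ThetaStar (x, y) (u, v)
  | _, _ => False
  end.

End Graphs.

(* Distances in S(G) are explicit in terms of those of G:
   d(x,y) doubles, d(x, uv) = 1 + 2 min(d(x,u), d(x,v)), and for distinct edges
   d(xy, uv) = 2 + 2 min of the four endpoint distances (they are read off a
   potential that is 1-Lipschitz and decreases by one along some edge).
   Comparing these, Theta between the half-edges x-xy and u-uv of distinct
   edges forces {x,y} Theta {u,v} in G; conversely {x,y} Theta {u,v} yields
   Theta between some pair of their half-edges. Hence Theta* of S(G) always
   refines S(Theta*_G), and the two coincide exactly when the two halves of
   every edge lie in one Theta* class of S(G). *)

From mathcomp Require Import all_boot zify.
Set Implicit Arguments. Unset Strict Implicit. Unset Printing Implicit Defensive.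

Lemma homo_connect (V W : finType) (r : rel V) (r' : rel W) (h : V -> W) :
  (forall x y, r x y -> connect r' (h x) (h y)) ->
  forall x y, connect r x y -> connect r' (h x) (h y).
Proof.
move=> hr x _ /connectP[p hp ->]; elim: p x hp => [|y p IH] x /=.
  by move=> _; apply: connect0.
by case/andP=> /hr hxy /IH; apply: connect_trans.
Qed.

Section Distance.
Variables (V : finType) (r : rel V).

Lemma walk_nP n x y :
  reflect (exists p : seq V, [/\ size p = n, path r x p & last x p = y])
          (walk_n r n x y).
Proof.
apply: (iffP existsP) => [[p /andP[hp /eqP hl]]|[p [hs hp hl]]].
  by exists (val p); rewrite size_tuple.
have hs' : size p == n by rewrite hs.
by exists (Tuple hs'); rewrite /= hp hl eqxx.
Qed.

Lemma walk_n0 x y : walk_n r 0 x y = (x == y).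
Proof. by apply/walk_nP/eqP => [[p [/size0nil -> _ <-]]|<-] //; exists [::]. Qed.

Lemma walk_n_rcons n x y z : walk_n r n x y -> r y z -> walk_n r n.+1 x z.
Proof.
move=> /walk_nP[p [hs hp hl]] hyz; apply/walk_nP; exists (rcons p z).
by rewrite size_rcons rcons_path last_rcons hs hp hl hyz.
Qed.

Lemma walk_n_cons n x y z : r x y -> walk_n r n y z -> walk_n r n.+1 x z.
Proof.
move=> hxy /walk_nP[p [hs hp hl]]; apply/walk_nP; exists (y :: p).
by rewrite /= hs hxy hp hl.
Qed.

Lemma walk_nS_last n x z :
  walk_n r n.+1 x z -> exists2 y, walk_n r n x y & r y z.
Proof.
move/walk_nP=> [p [hs hp hl]]; case/lastP: p hs hp hl => [//|p w].
rewrite size_rcons rcons_path last_rcons => [[hs]] /andP[hp hw] hl.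
by exists (last x p); [apply/walk_nP; exists p | rewrite -hl].
Qed.

Lemma walk_n_connect n x y : walk_n r n x y -> connect r x y.
Proof. by move/walk_nP=> [p [_ hp hl]]; apply/connectP; exists p. Qed.

(* A shortest walk is a path without repetition, so its length is below
   #|V| and it is found within the range searched by gdist. *)
Lemma gdist_spec x y : connect r x y ->
  walk_n r (gdist r x y) x y /\ forall n, walk_n r n x y -> gdist r x y <= n.
Proof.
move/connectP=> [p hp ->]; case/shortenP: hp => p' hp' hu _.
have hw : walk_n r (size p') x (last x p') by apply/walk_nP; exists p'.
have hsz : size p' < #|V|.
  by have := max_card (mem (x :: p')); rewrite (card_uniqP hu).
have hhas : has (fun n => walk_n r n x (last x p')) (iota 0 #|V|).
  by apply/hasP; exists (size p'); rewrite // mem_iota.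
have hf : gdist r x (last x p') < #|V|.
  by rewrite /gdist -[X in _ < X](size_iota 0) -has_find.
split; first by have := nth_find 0 hhas; rewrite nth_iota.
move=> n hn; case: (leqP #|V| n) => hVn; first exact: ltnW (leq_trans hf hVn).
rewrite leqNgt; apply/negP => hlt.
by have := before_find 0 hlt; rewrite nth_iota ?add0n // hn.
Qed.

Section Potential.
Variables (phi : V -> nat) (a : V).
Hypotheses (phi_a : phi a = 0) (phi_lip : forall u w, r u w -> phi w <= phi u + 1).

Lemma walk_n_potential n v : walk_n r n a v -> phi v <= n.
Proof.
elim: n v => [|n IH] v; first by rewrite walk_n0 => /eqP <-; rewrite phi_a.
by case/walk_nS_last=> y /IH hy /phi_lip; lia.
Qed.

Hypothesis phi_pred :
  forall v, v != a -> exists2 u, r u v & phi u + 1 = phi v.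

Lemma potential_walk_n v : walk_n r (phi v) a v.
Proof.
move hk: (phi v) => k; elim: k v hk => [|k IH] v hk.
  case: (eqVneq v a) => [->|/phi_pred[u _]]; first by rewrite walk_n0.
  by rewrite hk addn1.
case: (eqVneq v a) => [hva|/phi_pred[u hu hpu]]; first by rewrite hva phi_a in hk.
by apply: walk_n_rcons hu; apply: IH; lia.
Qed.

Lemma gdist_potential v : gdist r a v = phi v /\ connect r a v.
Proof.
have hc := walk_n_connect (potential_walk_n v).
have [hw hmin] := gdist_spec hc.
split=> //; apply/eqP; rewrite eqn_leq hmin ?potential_walk_n //.
exact: walk_n_potential hw.
Qed.

End Potential.

Section Connected.
Hypothesis r_conn : forall x y, connect r x y.

Lemma gdist_min n x y : walk_n r n x y -> gdist r x y <= n.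
Proof. by have [_] := gdist_spec (r_conn x y); apply. Qed.

Lemma gdist_walk x y : walk_n r (gdist r x y) x y.
Proof. by have [] := gdist_spec (r_conn x y). Qed.

Lemma gdistxx x : gdist r x x = 0.
Proof. by apply/eqP; rewrite -leqn0; apply: gdist_min; rewrite walk_n0. Qed.

Lemma gdist_eq0 x y : (gdist r x y == 0) = (x == y).
Proof.
apply/eqP/eqP => [h|<-]; last exact: gdistxx.
by have := gdist_walk x y; rewrite h walk_n0 => /eqP.
Qed.

Lemma gdist_lipr x y z : r y z -> gdist r x z <= gdist r x y + 1.
Proof. by move=> h; rewrite addn1 gdist_min // (walk_n_rcons (gdist_walk x y)). Qed.

Lemma gdist_lipl x w y : r x w -> gdist r x y <= gdist r w y + 1.
Proof. by move=> h; rewrite addn1 gdist_min // (walk_n_cons h (gdist_walk w y)). Qed.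

Lemma gdist_pred x z :
  0 < gdist r x z -> exists2 w, r w z & gdist r x w + 1 = gdist r x z.
Proof.
have := gdist_walk x z; case E: (gdist r x z) => [//|n] /walk_nS_last[w hw hwz] _.
by exists w => //; have := gdist_min hw; have := gdist_lipr x hwz; lia.
Qed.

Hypothesis r_sym : symmetric r.

Lemma gdistC x y : gdist r x y = gdist r y x.
Proof.
suff le_sym a b : gdist r b a <= gdist r a b by apply/eqP; rewrite eqn_leq !le_sym.
apply: (walk_n_potential (phi := gdist r ^~ a)) (gdist_walk a b).
  exact: gdistxx.
by move=> u w huw; apply: gdist_lipl; rewrite r_sym.
Qed.

Lemma Theta_revl a b c : Theta r (b, a) c = Theta r (a, b) c.
Proof. by rewrite /Theta /= r_sym addnC [X in _ != X]addnC eq_sym. Qed.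

Lemma Theta_revr a b c : Theta r c (b, a) = Theta r c (a, b).
Proof. by rewrite /Theta /= (r_sym b a); congr (_ && (_ && _)); rewrite eq_sym. Qed.

Lemma Theta_sym : symmetric (Theta r).
Proof.
move=> [a1 a2] [b1 b2]; rewrite /Theta /= andbCA; congr (_ && (_ && _)).
by rewrite !(gdistC a1) !(gdistC a2) [gdist r b1 a2 + _]addnC.
Qed.

Lemma ThetaStar_sym : connect_sym (Theta r).
Proof. exact/sym_connect_sym/Theta_sym. Qed.

Hypothesis r_irr : irreflexive r.

Lemma Theta_rev a b : r a b -> Theta r (a, b) (b, a).
Proof.
move=> h; rewrite /Theta /= h r_sym h /= !gdistxx.
have : gdist r a b != 0 by rewrite gdist_eq0; apply: contraTneq h => ->; rewrite r_irr.
lia.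
Qed.

End Connected.
End Distance.

Section Subdivision.
Variables (T : finType) (e : rel T).
Hypotheses (e_sym : symmetric e) (e_irr : irreflexive e)
  (e_conn : forall x y : T, connect e x y).

Local Notation D := (gdist e).
Local Notation Eset := (@Eset T e).
Local Notation SV := (@SV T e).
Local Notation sadj := (@sadj T e).

Lemma eq_set2 (p q x y : T) :
  [set p; q] = [set x; y] -> (p = x /\ q = y) \/ (p = y /\ q = x).
Proof.
move=> E; have hp : p \in [set x; y] by rewrite -E set21.
have hq : q \in [set x; y] by rewrite -E set22.
have hx : x \in [set p; q] by rewrite E set21.
have hy : y \in [set p; q] by rewrite E set22.
move: hp hq hx hy; rewrite !inE.
by do 4!case/orP=> /eqP ?; subst; auto.
Qed.

Lemma edge_set2 x y : e x y -> is_edge_set e [set x; y].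
Proof. by move=> h; apply/existsP; exists x; apply/existsP; exists y; rewrite h eqxx. Qed.

Definition edge_of x y (h : e x y) : Eset := exist _ [set x; y] (edge_set2 h).

Lemma ends_ex (s : Eset) :
  exists xy : T * T, e xy.1 xy.2 && (val s == [set xy.1; xy.2]).
Proof. by case: s => s /= /existsP[x /existsP[y hxy]]; exists (x, y). Qed.

Definition ends (s : Eset) : T * T := xchoose (ends_ex s).

Lemma endsP s : e (ends s).1 (ends s).2 /\ val s = [set (ends s).1; (ends s).2].
Proof. by have /andP[h /eqP] := xchooseP (ends_ex s). Qed.

Lemma ends_set2 (s : Eset) x y :
  val s = [set x; y] -> ends s = (x, y) \/ ends s = (y, x).
Proof.
case: (endsP s); case: (ends s) => p q /= _ -> /eq_set2[[-> ->]|[-> ->]]; by auto.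
Qed.

Lemma edge_mem_set2 (s : Eset) z : z \in val s -> exists2 y, e z y & val s = [set z; y].
Proof.
case: (endsP s); case: (ends s) => p q /= hpq ->; rewrite !inE => /orP[] /eqP ->.
  by exists q.
by exists p; rewrite 1?e_sym // setUC.
Qed.

Lemma sadj_sym : symmetric sadj.
Proof. by case=> [x|s] [y|t]. Qed.

Lemma sadj_irr : irreflexive sadj.
Proof. by case. Qed.

Definition sdist_v (a : SV) (y : T) : nat :=
  match a with
  | inl x => 2 * D x y
  | inr s => 1 + 2 * minn (D (ends s).1 y) (D (ends s).2 y)
  end.

Definition sdist (a v : SV) : nat :=
  match v with
  | inl y => sdist_v a y
  | inr t => if a == inr t then 0
             else 1 + minn (sdist_v a (ends t).1) (sdist_v a (ends t).2)
  end.

Lemma sdist_v_inr (s : Eset) x y z :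
  val s = [set x; y] -> sdist_v (inr s) z = 1 + 2 * minn (D x z) (D y z).
Proof. by move=> /ends_set2[] /= -> /=; lia. Qed.

Lemma sdist_inr a (t : Eset) x y : val t = [set x; y] ->
  sdist a (inr t) = if a == inr t then 0 else 1 + minn (sdist_v a x) (sdist_v a y).
Proof. by move=> /ends_set2[] /= -> /=; case: ifP => //; lia. Qed.

Lemma sdist_v_lip a w z : e w z -> sdist_v a z <= sdist_v a w + 2.
Proof.
case: a => [x|s] /= hwz; first by have := gdist_lipr e_conn x hwz; lia.
by have := gdist_lipr e_conn (ends s).1 hwz; have := gdist_lipr e_conn (ends s).2 hwz; lia.
Qed.

Lemma sdist_v_end (s : Eset) z : z \in val s -> sdist_v (inr s) z = 1.
Proof.
case/edge_mem_set2=> y _ hs; rewrite (sdist_v_inr _ hs) (gdistxx e_conn).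
by rewrite minnC minn0.
Qed.

Lemma sdist_aa a : sdist a a = 0.
Proof. by case: a => [x|t] /=; rewrite ?(gdistxx e_conn) ?eqxx. Qed.

Lemma sdist_lip_mem a z (t : Eset) : z \in val t ->
  sdist a (inr t) <= sdist a (inl z) + 1 /\ sdist a (inl z) <= sdist a (inr t) + 1.
Proof.
case/edge_mem_set2=> y hzy ht; rewrite (sdist_inr _ ht) /=.
case: (eqVneq a (inr t)) => [->|_]; first by rewrite sdist_v_end // ht set21.
have := sdist_v_lip a hzy; rewrite e_sym in hzy; have := sdist_v_lip a hzy; lia.
Qed.

Lemma sdist_lip a u w : sadj u w -> sdist a w <= sdist a u + 1.
Proof.
by case: u => [z|t]; case: w => [z'|t'] // /(sdist_lip_mem a) [].
Qed.

Lemma sdist_v_pred a z : a != inl z -> ~~ sadj a (inl z) ->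
  exists2 w, e w z & sdist_v a w + 2 = sdist_v a z.
Proof.
case: a => [x|s] /= hne hz.
  have /(gdist_pred e_conn)[w hwz hw] : 0 < D x z.
    by rewrite lt0n (gdist_eq0 e_conn); apply: contraNneq hne => ->.
  by exists w => //; lia.
have near_end p q : val s = [set p; q] -> z != p -> D p z <= D q z ->
    exists2 w, e w z & sdist_v (inr s) w + 2 = sdist_v (inr s) z.
  move=> hs hzp le_pq.
  have /(gdist_pred e_conn)[w hwz hw] : 0 < D p z by rewrite lt0n (gdist_eq0 e_conn) eq_sym.
  exists w => //; rewrite !(sdist_v_inr _ hs).
  by have := gdist_lipr e_conn q hwz; lia.
case: (endsP s) => _ hs; move: hz; rewrite hs !inE negb_or => /andP[hzp hzq].
case/orP: (leq_total (D (ends s).1 z) (D (ends s).2 z)) => le_ends.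
  exact: near_end hs hzp le_ends.
by apply: near_end le_ends; rewrite // hs setUC.
Qed.

Lemma sdist_pred_vertex a z : a != inl z ->
  exists2 u, sadj u (inl z) & sdist a u + 1 = sdist a (inl z).
Proof.
move=> hne; case: (boolP (sadj a (inl z))) => hadj.
  exists a; rewrite // sdist_aa.
  by case: a hne hadj => // s _ /sdist_v_end /esym.
have [w hwz hw] := sdist_v_pred hne hadj.
exists (inr (edge_of hwz)); first by rewrite /= set22.
rewrite (sdist_inr _ (erefl : val (edge_of hwz) = _)).
case: eqP => [ha|_]; last by have := sdist_v_lip a hwz; rewrite /=; lia.
by rewrite ha /= set22 in hadj.
Qed.

Lemma sdist_pred_edge a (t : Eset) : a != inr t ->
  exists2 u, sadj u (inr t) & sdist a u + 1 = sdist a (inr t).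
Proof.
move=> hne; case: (endsP t) => _ ht; rewrite (sdist_inr _ ht) (negbTE hne).
case/orP: (leq_total (sdist_v a (ends t).1) (sdist_v a (ends t).2)) => le_ends.
  by exists (inl (ends t).1); rewrite /= ?ht ?set21 //; lia.
by exists (inl (ends t).2); rewrite /= ?ht ?set22 //; lia.
Qed.

Lemma sdist_pred a v : v != a -> exists2 u, sadj u v & sdist a u + 1 = sdist a v.
Proof.
by rewrite eq_sym; case: v => [z|t] hne; [exact: sdist_pred_vertex | exact: sdist_pred_edge].
Qed.

Lemma gdist_sdist a v : gdist sadj a v = sdist a v.
Proof. by case: (gdist_potential (sdist_aa a) (@sdist_lip a) (@sdist_pred a) v). Qed.

Lemma sadj_connected a v : connect sadj a v.
Proof. by case: (gdist_potential (sdist_aa a) (@sdist_lip a) (@sdist_pred a) v). Qed.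

Lemma gdist_subdiv_vv x u : gdist sadj (inl x) (inl u) = 2 * D x u.
Proof. by rewrite gdist_sdist. Qed.

Lemma gdist_subdiv_ve x (t : Eset) u v : val t = [set u; v] ->
  gdist sadj (inl x) (inr t) = 1 + 2 * minn (D x u) (D x v).
Proof. by move=> ht; rewrite gdist_sdist (sdist_inr _ ht) /=; lia. Qed.

Lemma gdist_subdiv_ev (s : Eset) x y u : val s = [set x; y] ->
  gdist sadj (inr s) (inl u) = 1 + 2 * minn (D x u) (D y u).
Proof. by move=> hs; rewrite gdist_sdist; apply: sdist_v_inr. Qed.

Lemma gdist_subdiv_ee (s t : Eset) x y u v :
  s != t -> val s = [set x; y] -> val t = [set u; v] ->
  gdist sadj (inr s) (inr t) = 2 + 2 * minn (minn (D x u) (D x v)) (minn (D y u) (D y v)).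
Proof.
move=> hst hs ht; rewrite gdist_sdist (sdist_inr _ ht) !(sdist_v_inr _ hs).
have -> : (inr s == inr t :> SV) = false by apply/negbTE; apply: contra hst => /eqP [->].
lia.
Qed.

Lemma Theta_subdiv_halvesE (s t : Eset) x y u v :
  s != t -> val s = [set x; y] -> val t = [set u; v] ->
  Theta sadj (inl x, inr s) (inl u, inr t) =
  (D x u + minn (minn (D x u) (D x v)) (minn (D y u) (D y v))
   != minn (D x u) (D x v) + minn (D x u) (D y u)).
Proof.
move=> hst hs ht; rewrite /Theta /= hs ht !set21 /=.
rewrite gdist_subdiv_vv (gdist_subdiv_ee hst hs ht).
rewrite (gdist_subdiv_ve _ ht) (gdist_subdiv_ev _ hs).
by congr (~~ _); apply/eqP/eqP; lia.
Qed.

Section HalfEdges.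
Variables (s t : Eset) (x y u v : T).
Hypotheses (hst : s != t) (hs : val s = [set x; y]) (ht : val t = [set u; v]).
Hypotheses (hxy : e x y) (huv : e u v).

Lemma Theta_subdiv_Theta :
  Theta sadj (inl x, inr s) (inl u, inr t) -> Theta e (x, y) (u, v).
Proof.
rewrite (Theta_subdiv_halvesE hst hs ht) /Theta /= hxy huv /=.
have hyx : e y x by rewrite e_sym.
have hvu : e v u by rewrite e_sym.
have := gdist_lipr e_conn x huv; have := gdist_lipr e_conn x hvu.
have := gdist_lipr e_conn y huv; have := gdist_lipr e_conn y hvu.
have := gdist_lipl e_conn u hxy; have := gdist_lipl e_conn u hyx.
have := gdist_lipl e_conn v hxy; have := gdist_lipl e_conn v hyx.
by move=> *; lia.
Qed.

Lemma Theta_Theta_subdiv : Theta e (x, y) (u, v) ->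
  [|| Theta sadj (inl x, inr s) (inl u, inr t), Theta sadj (inl x, inr s) (inl v, inr t),
      Theta sadj (inl y, inr s) (inl u, inr t) | Theta sadj (inl y, inr s) (inl v, inr t)].
Proof.
have hs' : val s = [set y; x] by rewrite hs setUC.
have ht' : val t = [set v; u] by rewrite ht setUC.
rewrite (Theta_subdiv_halvesE hst hs ht) (Theta_subdiv_halvesE hst hs ht').
rewrite (Theta_subdiv_halvesE hst hs' ht) (Theta_subdiv_halvesE hst hs' ht').
rewrite /Theta /= hxy huv /=; apply: contraLR.
by rewrite !negb_or !negbK => /and4P[*]; lia.
Qed.

End HalfEdges.

Lemma sub_edgeP (f : SV * SV) : sadj f.1 f.2 -> exists z (s : Eset),
  [/\ z \in val s, sub_edge f = Some s & f = (inl z, inr s) \/ f = (inr s, inl z)].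
Proof.
case: f => [[z|s] [z'|s']] //= h; [exists z, s' | exists z', s]; split; by auto.
Qed.

Lemma ThetaStar_ends (s : Eset) x y : val s = [set x; y] -> ThetaStar e (x, y) (ends s).
Proof.
move=> hs; case: (endsP s) => + _; case: (ends_set2 hs) => -> /= hxy.
  exact: connect0.
by apply/connect1/(Theta_rev e_conn e_sym e_irr); rewrite e_sym.
Qed.

(* Meaningful only on edges of S(G), where it returns the underlying edge. *)
Definition base_edge (f : SV * SV) : T * T :=
  match f with
  | (inl x, inl y) => (x, y)
  | (inr s, _) | (_, inr s) => ends s
  end.

Lemma base_edgeE f (s : Eset) : sub_edge f = Some s -> base_edge f = ends s.
Proof. by case: f => [[?|?] [?|?]] //= [->]. Qed.

Lemma Theta_base_edge f f' :
  Theta sadj f f' -> ThetaStar e (base_edge f) (base_edge f').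
Proof.
move=> hth; have /and3P[hf hf' _] := hth.
have [z [s [hz /base_edgeE -> fE]]] := sub_edgeP hf.
have [z' [s' [hz' /base_edgeE -> f'E]]] := sub_edgeP hf'.
have {hth} : Theta sadj (inl z, inr s) (inl z', inr s').
  have -> : Theta sadj (inl z, inr s) (inl z', inr s') = Theta sadj f (inl z', inr s').
    by case: fE => ->; last rewrite (Theta_revl sadj_sym).
  by case: f'E hth => ->; last rewrite (Theta_revr sadj_sym).
case: (eqVneq s s') => [<- _|hss']; first exact: connect0.
have [y hzy hs] := edge_mem_set2 hz; have [y' hzy' hs'] := edge_mem_set2 hz'.
move/(Theta_subdiv_Theta hss' hs hs' hzy hzy')/connect1 => hc.
apply: connect_trans (connect_trans _ hc) (ThetaStar_ends hs').
by rewrite (ThetaStar_sym e_conn e_sym); apply: ThetaStar_ends.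
Qed.

Lemma ThetaStar_SThetaStar f f' : sadj f.1 f.2 -> sadj f'.1 f'.2 ->
  ThetaStar sadj f f' -> SThetaStar f f'.
Proof.
move=> hf hf' /(homo_connect Theta_base_edge).
have [_ [s [_ hse _]]] := sub_edgeP hf; have [_ [s' [_ hse' _]]] := sub_edgeP hf'.
rewrite /SThetaStar hse hse' (base_edgeE hse) (base_edgeE hse') => hc.
exists (ends s).1, (ends s).2, (ends s').1, (ends s').2.
rewrite -!surjective_pairing; split; first by case: (endsP s).
by split; first by case: (endsP s').
Qed.

Definition half_edge (c : T * T) : SV * SV :=
  (inl c.1, if insub [set c.1; c.2] is Some s then inr s else inl c.2).

Lemma half_edgeE (s : Eset) x y : val s = [set x; y] -> half_edge (x, y) = (inl x, inr s).
Proof. by move=> hs; rewrite /half_edge /= -hs valK. Qed.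

Section Halves.
Hypothesis halves : forall x y (s : Eset), e x y -> val s = [set x; y] ->
  ThetaStar sadj (inl x, inr s) (inr s, inl y).

Lemma ThetaStar_halves (s : Eset) z z' : z \in val s -> z' \in val s ->
  ThetaStar sadj (inl z, inr s) (inl z', inr s).
Proof.
move=> hz hz'; case: (eqVneq z z') => [<-|hzz']; first exact: connect0.
have [y hzy hs] := edge_mem_set2 hz.
move: hz'; rewrite hs => /set2P[hz'z|->]; first by rewrite hz'z eqxx in hzz'.
apply: connect_trans (halves hzy hs) (connect1 _).
by apply: (Theta_rev sadj_connected sadj_sym sadj_irr); rewrite /= hs set22.
Qed.

Lemma ThetaStar_half_edge f (s : Eset) x y : sadj f.1 f.2 -> sub_edge f = Some s ->
  val s = [set x; y] -> ThetaStar sadj f (half_edge (x, y)).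
Proof.
move=> hf hse hs; have [z [s' [hz]]] := sub_edgeP hf.
rewrite hse => -[ess'] fE; subst s'.
have hx : x \in val s by rewrite hs set21.
rewrite (half_edgeE hs); case: fE => ->; first exact: ThetaStar_halves.
apply: connect_trans (connect1 _) (ThetaStar_halves hz hx).
exact: (Theta_rev sadj_connected sadj_sym sadj_irr).
Qed.

Lemma Theta_half_edge c c' :
  Theta e c c' -> ThetaStar sadj (half_edge c) (half_edge c').
Proof.
case: c c' => [x y] [u v] hth; have /and3P[hxy huv _] := hth.
have hs : val (edge_of hxy) = [set x; y] by [].
have ht : val (edge_of huv) = [set u; v] by [].
rewrite (half_edgeE hs) (half_edgeE ht).
have hx : x \in val (edge_of hxy) by rewrite hs set21.
have hu : u \in val (edge_of huv) by rewrite ht set21.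
case: (eqVneq (edge_of hxy) (edge_of huv)) => [est|hst].
  by rewrite -est; apply: ThetaStar_halves hx _; rewrite est.
have via z w : z \in [set x; y] -> w \in [set u; v] ->
    Theta sadj (inl z, inr (edge_of hxy)) (inl w, inr (edge_of huv)) ->
    ThetaStar sadj (inl x, inr (edge_of hxy)) (inl u, inr (edge_of huv)).
  move=> hz hw /connect1; move/(connect_trans (ThetaStar_halves hx hz)).
  by move/connect_trans; apply; apply: ThetaStar_halves.
by case/or4P: (Theta_Theta_subdiv hst hs ht hxy huv hth); apply: via; rewrite ?set21 ?set22.
Qed.

Lemma SThetaStar_ThetaStar f f' : sadj f.1 f.2 -> sadj f'.1 f'.2 ->
  SThetaStar f f' -> ThetaStar sadj f f'.
Proof.
move=> hf hf'; have [_ [s [_ hse _]]] := sub_edgeP hf.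
have [_ [s' [_ hse' _]]] := sub_edgeP hf'.
rewrite /SThetaStar hse hse' => -[x [y [u [v [hs [hs' hc]]]]]].
apply: connect_trans (ThetaStar_half_edge hf hse hs) _.
apply: connect_trans (homo_connect Theta_half_edge hc) _.
rewrite (ThetaStar_sym sadj_connected sadj_sym).
exact: ThetaStar_half_edge hf' hse' hs'.
Qed.

End Halves.

Lemma SThetaStar_halves x y (s : Eset) :
  val s = [set x; y] -> SThetaStar (inl x, inr s) (inr s, inl y).
Proof. by move=> hs; exists x, y, x, y; split; [|split; [|apply: connect0]]. Qed.

End Subdivision.

Theorem lemma3p5 (T : finType) (e : rel T) :
  simple_graph e -> connected_graph e ->
  (forall (x y : T) (s : @Eset T e), e x y -> val s = [set x; y] ->
     ThetaStar (@sadj T e) (inl x, inr s) (inr s, inl y))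
  <->
  (forall f1 f2 : @SV T e * @SV T e,
     sadj f1.1 f1.2 -> sadj f2.1 f2.2 ->
     (ThetaStar (@sadj T e) f1 f2 <-> @SThetaStar T e f1 f2)).
Proof.
move=> [e_sym e_irr] e_conn; split=> [halves f f' hf hf' | coincide x y s _ hs].
  by split; [apply: ThetaStar_SThetaStar | apply: SThetaStar_ThetaStar].
have hx : sadj (inl x) (inr s) by rewrite /= hs set21.
have hy : sadj (inr s) (inl y) by rewrite /= hs set22.
by apply/(coincide (inl x, inr s) (inr s, inl y) hx hy); apply: SThetaStar_halves.
Qed.
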